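(* Let $G$ be a locally compact abelian group with dual group $\Gamma$, and let $(\mu,\nu)$ be a spectral pair of positive Borel measures on $(G,\Gamma)$. If there exists a sequence of $\mu$-measurable sets $A_n\subset G$ with $\mu(A_n)\ne0$ for all $n$ and $\mu(A_n)\to0$, then $\nu(\Gamma)=+\infty$.
   Context: $G$ is written additively; $\Gamma=\hat G$ is the group of continuous homomorphisms $G\to\mathbb{T}$ (unit circle in $\mathbb{C}$). Write $\langle x,\xi\rangle$ for the pairing, $e_\xi(x)=\langle x,\xi\rangle$. $(\mu,\nu)$ is a spectral pair if, with $(Ff)(\xi)=\int_G f(x)\overline{e_\xi(x)}\,d\mu(x)$ for $f\in\mathcal{L}^1\cap\mathcal{L}^2(\mu)$, the set $\{Ff\}$ is dense in $\mathcal{L}^2(\nu)$ and $\int_\Gamma|Ff|^2d\nu=\int_G|f|^2d\mu$ for all such $f$. *)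

From HB Require Import structures.
From mathcomp Require Import all_boot all_order all_algebra.
From mathcomp Require Import all_classical all_reals all_analysis.
From mathcomp Require Import complex.
Set Implicit Arguments. Unset Strict Implicit. Unset Printing Implicit Defensive.
Import Order.TTheory GRing.Theory Num.Theory.
Import numFieldTopology.Exports numFieldNormedType.Exports.
Local Open Scope classical_set_scope.
Local Open Scope ring_scope.
Local Open Scope complex_scope.

HB.instance Definition _ (R : rcfType) :=
  PseudoPointedMetric.copy R[i] (R[i])^o.

Definition borel (T : ptopologicalType) := g_sigma_algebraType (@open T).

Section GBorel.
Variable G : topologicalZmodType.
Definition pt_group : Type := G.
HB.instance Definition _ := Choice.on pt_group.
HB.instance Definition _ := isPointed.Build pt_group (0 : G).
Definition gborel := g_sigma_algebraType (@open G : set (set pt_group)).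
End GBorel.

Section Dual.
Variables (R : realType) (G : topologicalZmodType).

Definition is_character (chi : {compact-open, G -> R[i]}) : Prop :=
  [/\ continuous (chi : G -> R[i]),
      (forall x, `|chi x| = 1) &
      (forall x y, chi (x + y) = chi x * chi y)].

Lemma is_character1 : is_character (fun _ => 1).
Proof.
split; first by move=> x; exact: cvg_cst.
- by move=> x; rewrite normr1.
- by move=> x y; rewrite mulr1.
Qed.

Definition dual : Type := set_type is_character.
HB.instance Definition _ := Topological.on dual.

HB.instance Definition _ :=
  isPointed.Build dual (exist _ (fun _ => 1) (mem_set is_character1)).

Definition pairing (xi : dual) (x : G) : R[i] := (sval xi) x.
End Dual.

Section L2.
Variables (R : realType) (d : measure_display) (T : measurableType d).
Variable (m : {measure set T -> \bar R}).
Local Open Scope ereal_scope.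

Definition cabs2 (z : R[i]) : R := (complex.Re z ^+ 2 + complex.Im z ^+ 2)%R.
Definition cabs (z : R[i]) : R := Num.sqrt (cabs2 z).

Definition cmeasurable (f : T -> R[i]) : Prop :=
  measurable_fun setT (fun x => complex.Re (f x)) /\ measurable_fun setT (fun x => complex.Im (f x)).

Definition L1 (f : T -> R[i]) : Prop :=
  cmeasurable f /\ \int[m]_x (cabs (f x))%:E < +oo.

Definition L2 (f : T -> R[i]) : Prop :=
  cmeasurable f /\ \int[m]_x (cabs2 (f x))%:E < +oo.

Definition cintegral (f : T -> R[i]) : R[i] :=
  (fine (\int[m]_x (complex.Re (f x))%:E) +i* fine (\int[m]_x (complex.Im (f x))%:E))%C.
End L2.

Section Spectral.
Variables (R : realType) (G : topologicalZmodType).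
Variables (mu : {measure set (gborel G) -> \bar R})
          (nu : {measure set (borel (dual R G)) -> \bar R}).
Local Open Scope ereal_scope.

Definition fourier (f : gborel G -> R[i]) (xi : borel (dual R G)) : R[i] :=
  cintegral mu (fun x => (f x * conjc (pairing xi x))%R).

Definition spectral_pair : Prop :=
  (forall f, L1 mu f -> L2 mu f ->
     L2 nu (fourier f) /\
     \int[nu]_xi (cabs2 (fourier f xi))%:E = \int[mu]_x (cabs2 (f x))%:E) /\
  (forall g, L2 nu g -> forall e : R, (0 < e)%R ->
     exists f, [/\ L1 mu f, L2 mu f &
       \int[nu]_xi (cabs2 (fourier f xi - g xi)%R)%:E < e%:E]).
End Spectral.

From HB Require Import structures.
From mathcomp Require Import all_boot all_order all_algebra.
From mathcomp Require Import all_classical all_reals all_analysis.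
From mathcomp Require Import complex.
From mathcomp Require Import ring lra.
Set Implicit Arguments. Unset Strict Implicit. Unset Printing Implicit Defensive.
Import Order.TTheory GRing.Theory Num.Theory.
Import numFieldNormedType.Exports.
Local Open Scope classical_set_scope.
Local Open Scope ring_scope.

(** Test the Plancherel identity on the indicator [f] of a set [A] of small
    positive measure [a]: [|Ff| <= mu(A)] pointwise, hence
    [a = ||f||^2 = ||Ff||^2 <= 2 a^2 nu(Gamma)], i.e. [1 <= 2 a nu(Gamma)].
    Since [a] can be taken arbitrarily small, [nu(Gamma)] must be infinite. *)

Lemma indic_ge0 (T : Type) (R : realType) (A : set T) (x : T) :
  0 <= (\1_A x : R).
Proof. by rewrite indicE; case: (x \in A). Qed.

Lemma indic_sqr (T : Type) (R : realType) (A : set T) (x : T) :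
  (\1_A x : R) ^+ 2 = \1_A x.
Proof. by rewrite indicE; case: (x \in A); rewrite ?expr1n ?expr0n. Qed.

Lemma cabs2M (R : realType) (z w : R[i]) : cabs2 (z * w) = cabs2 z * cabs2 w.
Proof. by case: z w => a b [c e]; rewrite /cabs2 /=; ring. Qed.

Lemma cabs2_conj (R : realType) (z : R[i]) : cabs2 (conjc z) = cabs2 z.
Proof. by case: z => a b; rewrite /cabs2 /= sqrrN. Qed.

Lemma cabs2_real (R : realType) (r : R) : cabs2 (r%:C)%C = r ^+ 2.
Proof. by rewrite /cabs2 /= expr0n addr0. Qed.

Lemma cabs2_ge0 (R : realType) (z : R[i]) : 0 <= cabs2 z.
Proof. by rewrite /cabs2 addr_ge0 // sqr_ge0. Qed.

Lemma Re_Im_le_cabs2 (R : realType) (z : R[i]) (r : R) :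
  0 <= r -> cabs2 z <= r ^+ 2 -> `|complex.Re z| <= r /\ `|complex.Im z| <= r.
Proof.
case: z => a b r0; rewrite /cabs2 /= => zr.
by split; rewrite ler_norml; apply/andP; split; nra.
Qed.

Definition cindic {R : realType} {T : Type} (A : set T) (x : T) : R[i] :=
  ((\1_A x : R)%:C)%C.

Section indicator_integrals.
Context d (T : measurableType d) (R : realType).
Variable mu : {measure set T -> \bar R}.
Local Open Scope ereal_scope.

(* No measurability is needed: a nonnegative integral is a supremum over
   simple minorants. *)
Lemma ge0_le_integral_nonmeasurable (f g : T -> \bar R) :
  (forall x, 0 <= f x) -> (forall x, f x <= g x) ->
  \int[mu]_x f x <= \int[mu]_x g x.
Proof.
move=> f0 fg.
have g0 x : 0 <= g x by exact: le_trans (f0 x) (fg x).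
rewrite (ge0_integralTE mu f0) (ge0_integralTE mu g0) /=.
apply: ereal_sup_le => _ [h /= hf <-]; exists h => //= x.
exact: le_trans (hf x) (fg x).
Qed.

Lemma integral_le_indic_measure (A : set T) (h : T -> \bar R) :
  measurable A -> (forall x, 0 <= h x <= (\1_A x)%:E) ->
  0 <= \int[mu]_x h x <= mu A.
Proof.
move=> mA hA; apply/andP; split.
  by apply: integral_ge0 => x _; case/andP: (hA x).
rewrite -(setIT A) -integral_indic //.
by apply: ge0_le_integral_nonmeasurable => x; case/andP: (hA x).
Qed.

Lemma abs_integral_le_measure (A : set T) (a : R) (g : T -> R) :
  measurable A -> mu A = a%:E -> (forall x, (`|g x| <= \1_A x)%R) ->
  (`|fine (\int[mu]_x (g x)%:E)| <= a)%R.
Proof.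
move=> mA muA gA; rewrite integralE.
have part_bound (k : T -> \bar R) : (forall x, 0 <= k x <= (\1_A x)%:E) ->
    exists2 p : R, \int[mu]_x k x = p%:E & (0 <= p <= a)%R.
  move=> /(integral_le_indic_measure mA); rewrite muA.
  case: (\int[mu]_x k x) => [p| |] /andP[]; rewrite ?leey ?leNye //.
  by move=> p0 pa; exists p => //; rewrite -!lee_fin p0.
have [p -> /andP[p0 pa]] : exists2 p : R,
    \int[mu]_x (EFin \o g)^\+ x = p%:E & (0 <= p <= a)%R.
  apply: part_bound => x; rewrite funepos_ge0 funeposE /= -EFin_max lee_fin.
  by rewrite ge_max indic_ge0 andbT; have := gA x; rewrite ler_norml => /andP[].
have [q -> /andP[q0 qa]] : exists2 q : R,
    \int[mu]_x (EFin \o g)^\- x = q%:E & (0 <= q <= a)%R.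
  apply: part_bound => x; rewrite funeneg_ge0 funenegE /= -EFin_max lee_fin.
  by rewrite ge_max indic_ge0 andbT; have := gA x; rewrite ler_norml lerNl => /andP[].
by rewrite /= ler_norml; apply/andP; split; lra.
Qed.

Lemma cabs2_cintegral_le (A : set T) (a : R) (h : T -> R[i]) :
  measurable A -> mu A = a%:E -> (forall x, (cabs2 (h x) <= \1_A x ^+ 2)%R) ->
  (cabs2 (cintegral mu h) <= 2 * a ^+ 2)%R.
Proof.
move=> mA muA hA.
have parts_le x := Re_Im_le_cabs2 (@indic_ge0 _ _ A x) (hA x).
have /(abs_integral_le_measure mA muA) := fun x => (parts_le x).1.
have /(abs_integral_le_measure mA muA) := fun x => (parts_le x).2.
rewrite /cintegral /cabs2 /=; set p := fine _; set q := fine _.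
by rewrite !ler_norml => /andP[? ?] /andP[? ?]; nra.
Qed.

Lemma cabs2_cindic (A : set T) x : cabs2 (cindic A x : R[i]) = \1_A x.
Proof. by rewrite cabs2_real indic_sqr. Qed.

Lemma cabs_cindic (A : set T) x : cabs (cindic A x : R[i]) = \1_A x.
Proof.
by rewrite /cabs cabs2_cindic -{1}indic_sqr sqrtr_sqr ger0_norm // indic_ge0.
Qed.

Lemma integral_cabs2_cindic (A : set T) :
  measurable A -> \int[mu]_x (cabs2 (cindic A x))%:E = mu A.
Proof.
move=> mA; under eq_integral do rewrite cabs2_cindic.
by rewrite integral_indic // setIT.
Qed.

Lemma cmeasurable_cindic (A : set T) :
  measurable A -> cmeasurable (cindic A : T -> R[i]).
Proof.
by move=> mA; split; [exact: measurable_realfun.measurable_indic | exact: measurable_cst].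
Qed.

Lemma L1_cindic (A : set T) : measurable A -> mu A < +oo -> L1 mu (cindic A).
Proof.
move=> mA Afin; split; first exact: cmeasurable_cindic.
by under eq_integral do rewrite cabs_cindic; rewrite integral_indic // setIT.
Qed.

Lemma L2_cindic (A : set T) : measurable A -> mu A < +oo -> L2 mu (cindic A).
Proof.
by move=> mA Afin; split; [exact: cmeasurable_cindic | rewrite integral_cabs2_cindic].
Qed.

End indicator_integrals.

Lemma cabs2_pairing (R : realType) (G : topologicalZmodType) (xi : dual R G) x :
  cabs2 (pairing xi x) = 1.
Proof.
have := svalP xi; rewrite inE => -[_ norm1 _].
have := add_Re2_Im2 (pairing xi x); rewrite /pairing norm1 expr1n.
by move=> /(congr1 (@complex.Re R)).
Qed.

Section spectral_pair_bound.
Variables (R : realType) (G : topologicalZmodType).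
Variables (mu : {measure set (gborel G) -> \bar R})
          (nu : {measure set (borel (dual R G)) -> \bar R}).

Lemma cabs2_fourier_cindic_le (A : set (gborel G)) (a : R) xi :
  measurable A -> mu A = a%:E ->
  cabs2 (fourier mu (cindic A) xi) <= 2 * a ^+ 2.
Proof.
move=> mA muA; apply: cabs2_cintegral_le mA muA _ => x.
by rewrite cabs2M cabs2_conj cabs2_pairing mulr1 cabs2_real.
Qed.

Lemma spectral_pair_indic_bound (A : set (gborel G)) (a M : R) :
  spectral_pair mu nu -> measurable A -> mu A = a%:E -> 0 < a ->
  nu [set: borel (dual R G)] = M%:E -> 1 <= 2 * a * M.
Proof.
move=> [plancherel _] mA muA a0 nuM.
have Afin : (mu A < +oo)%E by rewrite muA ltry.
have [_ isometry] := plancherel _ (L1_cindic mA Afin) (L2_cindic mA Afin).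
have : (\int[nu]_xi (cabs2 (fourier mu (cindic A) xi))%:E
          <= \int[nu]_xi (2 * a ^+ 2)%:E)%E.
  apply: ge0_le_integral_nonmeasurable => xi; rewrite lee_fin ?cabs2_ge0 //.
  exact: cabs2_fourier_cindic_le.
rewrite isometry integral_cabs2_cindic // integral_cst //= muA nuM -EFinM lee_fin.
by nra.
Qed.

End spectral_pair_bound.

Theorem corollaryA12 (R : realType) (G : topologicalZmodType)
  (G_lc : locally_compact [set: G]) (G_T2 : hausdorff_space G)
  (mu : {measure set (gborel G) -> \bar R})
  (nu : {measure set (borel (dual R G)) -> \bar R})
  (spec : spectral_pair mu nu)
  (A : nat -> set (gborel G))
  (A_meas : forall n, measurable (A n))
  (A_ne0 : forall n, mu (A n) != 0%E)
  (A_lim : (fun n => mu (A n)) @ \oo --> 0%E) :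
  nu [set: borel (dual R G)] = +oo%E.
Proof.
have : (0 <= nu [set: borel (dual R G)])%E by exact: measure_ge0.
case nuM : (nu [set: borel (dual R G)]) => [M| |] // M0.
rewrite lee_fin in M0; exfalso.
pose e := (2 * (M + 1))^-1.
have e0 : (0 < e%:E)%E by rewrite lte_fin invr_gt0; lra.
have [N _ /(_ N (leqnn N)) /= muAN] := A_lim _ (open_ereal_lt' e0).
have Nfin : mu (A N) \is a fin_num.
  by rewrite ge0_fin_numE ?measure_ge0 // (lt_trans muAN) ?ltry.
set a := fine (mu (A N)).
have muA : mu (A N) = a%:E by rewrite fineK.
have a0 : 0 < a by rewrite -lte_fin -muA lt0e A_ne0 measure_ge0.
have ae : a < e by rewrite -lte_fin -muA.
have := spectral_pair_indic_bound spec (A_meas N) muA a0 nuM.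
have : a * (2 * (M + 1)) < 1 by rewrite -ltr_pdivlMr ?div1r //; lra.
nra.
Qed.
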